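(* There exists $r_0>0$ such that $\widehat{M}(r)\neq 0$ for all $r>r_0$, where $\widehat M$ is the function defined in the context.
   Context: For $r>\frac23$ let $u_b(r)\in(\frac65,\frac43)$ be the unique $u\in(\frac65,\frac43)$ with $2-u+2q(1-u)=0$ at $q=1+\sqrt{\frac{r+u-2}{r+0.1}}$. Set $q_{f,\pm}(r)=1\pm\sqrt{\frac{r}{r+0.1}}$, $q_{b,\pm}(r)=1\pm\sqrt{\frac{r+u_b(r)-2}{r+0.1}}$, $S(r)=(q_{f,+}-2q_{f,-})+(q_{b,+}-2q_{b,-})$, and let $(D_0(r),\mu_0(r))$ with $D_0(r)>0$ be the solution of $2+\mu=\tfrac12\sqrt{2D(r+0.1)}\,(q_{f,+}(r)-2q_{f,-}(r))$, $u_b(r)+\mu=-\tfrac12\sqrt{2D(r+0.1)}\,(q_{b,+}(r)-2q_{b,-}(r))$, i.e. $D_0=\frac{2(2-u_b)^2}{(r+0.1)S^2}$, $\mu_0=-2+\frac{(2-u_b)(q_{f,+}-2q_{f,-})}{S}$. Let $\phi(\chi)=\big(1+e^{-\frac{\sqrt2}{2}\chi}\big)^{-1}$, and for $j\in\{f,b\}$ let $\kappa_j=\frac12-\frac{q_{j,-}}{q_{j,+}}$, $I_j=\int_{-\infty}^{\infty}e^{-\sqrt2\kappa_j\chi}\phi'(\chi)^2d\chi$, $J_j^{(m)}=\int_{-\infty}^{\infty}e^{-\sqrt2\kappa_j\chi}\phi'(\chi)\phi(\chi)^m d\chi$ ($m=1,2,3$), all quantities depending on $r$. Define $\widehat M_f=-\frac{q_{f,+}D_0\sqrt2(q_{f,+}-2q_{f,-})}{2(\mu_0+2)}I_f$,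 $M_f=\frac{q_{f,+}}{2}\sqrt2(q_{f,+}-2q_{f,-})I_f+\frac{0.1}{r+0.1}J_f^{(1)}-2q_{f,+}J_f^{(2)}+q_{f,+}^2J_f^{(3)}$, $\widehat M_b=-\frac{q_{b,+}\sqrt2(q_{b,+}-2q_{b,-})}{2(\mu_0+u_b)}I_b$, $M_b=-\frac{q_{b,+}}{2}\sqrt2(q_{b,+}-2q_{b,-})I_b+\frac{u_b-2.1}{r+0.1}J_b^{(1)}+2q_{b,+}J_b^{(2)}-q_{b,+}^2J_b^{(3)}$, and $\widehat M(r)=\frac{M_b(r)}{\widehat M_b(r)}-\frac{M_f(r)}{\widehat M_f(r)}$. ($\widehat M$ is, up to a nonzero factor, the determinant of the Jacobian with respect to $(D,\mu)$ of the Melnikov functions measuring the splitting of the front and back connections in the Barkley traveling-wave system.) *)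

From Stdlib Require Import Reals Lra ClassicalEpsilon.
From Coquelicot Require Import Coquelicot.
Open Scope R_scope.

(* u_b(r): the (unique) u in (6/5,4/3) with 2-u+2q(1-u)=0, q = 1+sqrt((r+u-2)/(r+0.1)).
   Chosen by Hilbert's epsilon; the context asserts existence and uniqueness for r>2/3. *)
Definition ub_prop (r u : R) : Prop :=
  6/5 < u < 4/3 /\
  2 - u + 2 * (1 + sqrt ((r + u - 2) / (r + 1/10))) * (1 - u) = 0.

Definition ub (r : R) : R := epsilon (inhabits 0) (ub_prop r).

Definition qfp (r : R) : R := 1 + sqrt (r / (r + 1/10)).
Definition qfm (r : R) : R := 1 - sqrt (r / (r + 1/10)).
Definition qbp (r : R) : R := 1 + sqrt ((r + ub r - 2) / (r + 1/10)).
Definition qbm (r : R) : R := 1 - sqrt ((r + ub r - 2) / (r + 1/10)).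

Definition Sr (r : R) : R := (qfp r - 2 * qfm r) + (qbp r - 2 * qbm r).

Definition D0 (r : R) : R := 2 * (2 - ub r) ^ 2 / ((r + 1/10) * Sr r ^ 2).
Definition mu0 (r : R) : R := -2 + (2 - ub r) * (qfp r - 2 * qfm r) / Sr r.

Definition phi (x : R) : R := / (1 + exp (- (sqrt 2 / 2) * x)).

Definition kappa_f (r : R) : R := 1/2 - qfm r / qfp r.
Definition kappa_b (r : R) : R := 1/2 - qbm r / qbp r.

Definition Iint (k : R) : R :=
  RInt_gen (fun x => exp (- sqrt 2 * k * x) * (Derive phi x) ^ 2)
           (Rbar_locally m_infty) (Rbar_locally p_infty).
Definition Jint (k : R) (m : nat) : R :=
  RInt_gen (fun x => exp (- sqrt 2 * k * x) * Derive phi x * phi x ^ m)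
           (Rbar_locally m_infty) (Rbar_locally p_infty).

Definition Mhat_f (r : R) : R :=
  - (qfp r * D0 r * sqrt 2 * (qfp r - 2 * qfm r)) / (2 * (mu0 r + 2)) * Iint (kappa_f r).
Definition M_f (r : R) : R :=
  qfp r / 2 * sqrt 2 * (qfp r - 2 * qfm r) * Iint (kappa_f r)
  + (1/10) / (r + 1/10) * Jint (kappa_f r) 1
  - 2 * qfp r * Jint (kappa_f r) 2
  + qfp r ^ 2 * Jint (kappa_f r) 3.
Definition Mhat_b (r : R) : R :=
  - (qbp r * sqrt 2 * (qbp r - 2 * qbm r)) / (2 * (mu0 r + ub r)) * Iint (kappa_b r).
Definition M_b (r : R) : R :=
  - (qbp r / 2) * sqrt 2 * (qbp r - 2 * qbm r) * Iint (kappa_b r)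
  + (ub r - 21/10) / (r + 1/10) * Jint (kappa_b r) 1
  + 2 * qbp r * Jint (kappa_b r) 2
  - qbp r ^ 2 * Jint (kappa_b r) 3.

Definition Mhat (r : R) : R := M_b r / Mhat_b r - M_f r / Mhat_f r.

From Stdlib Require Import Reals Lra Psatz FunctionalExtensionality Classical ClassicalEpsilon.
From Coquelicot Require Import Coquelicot.
Open Scope R_scope.

(* Since phi' = lam phi (1 - phi) with lam = sqrt 2 / 2, differentiating
   e^(-sqrt 2 k x) phi^(m+1) (1 - phi) and integrating over the line gives
   (m + 2) J^(m+1) = (m + 1 - 2k) J^(m) for m >= 1, and I = lam (J^(1) - J^(2)).
   Hence every integral in M_f, Mhat_f (resp. M_b, Mhat_b) is an explicit multiple
   of J_f^(1) > 0 (resp. J_b^(1) > 0), which cancels in the ratio.  With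
   s_f = sqrt (r / (r + 0.1)), s_b the analogous root and S = 3 s_f + 3 s_b - 2,
     M_b / Mhat_b  = (3 + s_b - 6 s_b^2 + 3 (u_b - 2.1) / (r + 0.1)) (2 - u_b) / (2 s_b S),
     -M_f / Mhat_f = (6 s_f^2 - s_f - 3 + 0.3 / (r + 0.1)) (r + 0.1) S / (4 s_f (2 - u_b)).
   For r >= 10 both roots lie in [0.9, 1), so the first ratio is > -1/2 while the
   second is >= 0.9, and Mhat r > 0. *)

Local Notation lam := (sqrt 2 / 2).
Local Notation weight k x := (exp (- sqrt 2 * k * x)).
Local Notation is_RInt_line f l :=
  (is_RInt_gen f (Rbar_locally m_infty) (Rbar_locally p_infty) l).

Lemma exp_le_exp_of_le x y : x <= y -> exp x <= exp y.
Proof. intros [Hlt | ->]; [left; apply exp_increasing|]; lra. Qed.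

Lemma sqrt2_pos : 0 < sqrt 2.
Proof. apply sqrt_lt_R0; lra. Qed.

Lemma lam_eq_inv_sqrt2 : lam = / sqrt 2.
Proof.
  assert (Hs2 := sqrt2_pos). assert (Hss := sqrt_sqrt 2 ltac:(lra)).
  apply (Rmult_eq_reg_l (sqrt 2)); [|lra].
  rewrite Rinv_r by lra. replace (sqrt 2 * (sqrt 2 / 2)) with (sqrt 2 * sqrt 2 / 2) by field.
  rewrite Hss. field.
Qed.

Lemma nondecreasing_bounded_cvg_p_infty (F : R -> R) (M : R) :
  (forall x y, x <= y -> F x <= F y) -> (forall x, F x <= M) ->
  exists l, filterlim F (Rbar_locally p_infty) (locally l) /\ forall x, F x <= l.
Proof.
  intros Hmono HM.
  destruct (completeness (fun y => exists x, y = F x)) as [l [Hub Hleast]].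
  { exists M. intros y [x ->]. apply HM. }
  { exists (F 0), 0. reflexivity. }
  assert (HFl : forall x, F x <= l) by (intro x; apply Hub; exists x; reflexivity).
  exists l. split; [|exact HFl].
  apply filterlim_locally. intros [eps Heps]; simpl.
  assert (Hclose : exists x0, l - eps < F x0).
  { apply not_all_not_ex. intro Hfar.
    assert (l <= l - eps); [|lra].
    apply Hleast. intros y [x ->]. apply Rnot_lt_le, Hfar. }
  destruct Hclose as [x0 Hx0].
  exists x0. intros x Hx. specialize (Hmono x0 x (Rlt_le _ _ Hx)). specialize (HFl x).
  apply Rabs_lt_between'. lra.
Qed.

Lemma nondecreasing_bounded_cvg_m_infty (F : R -> R) (M : R) :
  (forall x y, x <= y -> F x <= F y) -> (forall x, M <= F x) ->
  exists l, filterlim F (Rbar_locally m_infty) (locally l) /\ forall x, l <= F x.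
Proof.
  intros Hmono HM.
  destruct (nondecreasing_bounded_cvg_p_infty (fun x => - F (- x)) (- M)) as [l [Hl HFl]].
  { intros x y Hxy. apply Ropp_le_contravar, Hmono. lra. }
  { intro x. apply Ropp_le_contravar, HM. }
  exists (- l). split.
  - apply (filterlim_ext (fun x => - (- F (- - x)))).
    { intro x. now rewrite !Ropp_involutive. }
    apply (filterlim_comp _ _ _ Ropp (fun y => - (- F (- y))) _ (Rbar_locally p_infty));
      [apply (filterlim_Rbar_opp m_infty)|].
    apply (filterlim_comp _ _ _ _ _ _ _ _ Hl (filterlim_opp (V := R_NormedModule) l)).
  - intro x. specialize (HFl (- x)). rewrite Ropp_involutive in HFl. lra.
Qed.

Lemma filterlim_p_infty_0_of_le_exp (f : R -> R) (c : R) :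
  0 < c -> (forall x, Rabs (f x) <= exp (- c * x)) ->
  filterlim f (Rbar_locally p_infty) (locally 0).
Proof.
  intros Hc Hf. apply filterlim_locally. intros [eps Heps]; simpl.
  exists (- ln eps / c). intros x Hx.
  change (Rabs (f x - 0) < eps). rewrite Rminus_0_r.
  apply (Rle_lt_trans _ _ _ (Hf x)). rewrite <- (exp_ln eps Heps).
  apply exp_increasing.
  apply (Rmult_lt_compat_l c) in Hx; [|exact Hc].
  replace (c * (- ln eps / c)) with (- ln eps) in Hx by (field; lra). lra.
Qed.

Lemma filterlim_m_infty_0_of_le_exp (f : R -> R) (c : R) :
  0 < c -> (forall x, Rabs (f x) <= exp (c * x)) ->
  filterlim f (Rbar_locally m_infty) (locally 0).
Proof.
  intros Hc Hf.
  apply (filterlim_ext (fun x => f (- - x))); [intro x; now rewrite Ropp_involutive|].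
  apply (filterlim_comp _ _ _ Ropp (fun y => f (- y)) _ (Rbar_locally p_infty));
    [apply (filterlim_Rbar_opp m_infty)|].
  apply (filterlim_p_infty_0_of_le_exp _ c Hc). intro x.
  replace (- c * x) with (c * - x) by ring. apply Hf.
Qed.

Section NonnegIntegrand.

Variable f : R -> R.
Hypothesis f_cont : forall x, continuous f x.
Hypothesis f_ge0 : forall x, 0 <= f x.

Let F x := RInt f 0 x.

Let ex_RInt_f a b : ex_RInt f a b.
Proof. apply (ex_RInt_continuous (V := R_CompleteNormedModule)). intros; apply f_cont. Qed.

Let is_derive_F x : is_derive F x (f x).
Proof.
  apply (is_derive_RInt f F 0 x); [|apply f_cont].
  apply filter_forall. intro b. apply (RInt_correct (V := R_CompleteNormedModule)), ex_RInt_f.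
Qed.

Let F_sub x y : F y - F x = RInt f x y.
Proof.
  unfold F. rewrite <- (RInt_Chasles f 0 x y) by apply ex_RInt_f.
  unfold plus; simpl; ring.
Qed.

Let F_nondecreasing x y : x <= y -> F x <= F y.
Proof.
  intro Hxy. assert (Hint : 0 <= RInt f x y) by (apply RInt_ge_0; auto).
  rewrite <- F_sub in Hint. lra.
Qed.

Lemma is_RInt_line_nonneg_bounded (M : R) :
  (forall a b, a <= b -> RInt f a b <= M) ->
  exists l, is_RInt_line f l /\ RInt f 0 1 <= l.
Proof.
  intros HM.
  assert (HF0 : F 0 = 0) by (unfold F; now rewrite RInt_point).
  destruct (nondecreasing_bounded_cvg_p_infty F M) as [lp [Hlp HFlp]];
    [exact F_nondecreasing| |].
  { intro x. apply (Rle_trans _ (F (Rmax x 0))); [apply F_nondecreasing, Rmax_l|].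
    replace (F (Rmax x 0)) with (F (Rmax x 0) - F 0) by lra.
    rewrite F_sub. apply HM, Rmax_r. }
  destruct (nondecreasing_bounded_cvg_m_infty F (- M)) as [lm [Hlm HFlm]];
    [exact F_nondecreasing| |].
  { intro x. apply (Rle_trans _ (F (Rmin x 0))); [|apply F_nondecreasing, Rmin_l].
    assert (H := HM (Rmin x 0) 0 (Rmin_r x 0)). rewrite <- F_sub, HF0 in H. lra. }
  exists (lp - lm). split.
  - apply (is_RInt_gen_ext (Derive F)).
    { apply filter_forall. intros ab x _. now apply is_derive_unique. }
    apply is_RInt_gen_Derive; trivial; apply filter_forall; intros ab x _.
    + eexists; apply is_derive_F.
    + apply (continuous_ext f); [intro; symmetry; now apply is_derive_unique|apply f_cont].
  - specialize (HFlp 1). specialize (HFlm 0). rewrite HF0 in HFlm.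
    assert (H01 := F_sub 0 1). lra.
Qed.

End NonnegIntegrand.

Lemma is_RInt_line_lin_comb (f g h : R -> R) (lf lg c d : R) :
  is_RInt_line f lf -> is_RInt_line g lg -> (forall x, h x = c * f x + d * g x) ->
  is_RInt_line h (c * lf + d * lg).
Proof.
  intros Hf Hg Hh.
  replace h with (fun x => plus (scal c (f x)) (scal d (g x)))
    by (apply functional_extensionality; intro x; now rewrite Hh).
  exact (is_RInt_gen_plus _ _ _ _ (is_RInt_gen_scal _ c _ Hf) (is_RInt_gen_scal _ d _ Hg)).
Qed.

Lemma phi_mul_one_plus_exp x : phi x * (1 + exp (- lam * x)) = 1.
Proof. unfold phi. assert (0 < exp (- lam * x)) by apply exp_pos. field. lra. Qed.

Lemma phi_pos_lt_1 x : 0 < phi x < 1.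
Proof.
  assert (HE : 0 < exp (- lam * x)) by apply exp_pos.
  assert (H := phi_mul_one_plus_exp x).
  split; nra.
Qed.

Lemma phi_le_exp x : phi x <= exp (lam * x).
Proof.
  assert (H := phi_mul_one_plus_exp x). assert (Hp := phi_pos_lt_1 x).
  assert (HE : exp (- lam * x) * exp (lam * x) = 1).
  { rewrite <- exp_plus, <- exp_0. f_equal. ring. }
  assert (0 < exp (lam * x)) by apply exp_pos.
  nra.
Qed.

Lemma one_minus_phi_le_exp x : 1 - phi x <= exp (- lam * x).
Proof.
  assert (H := phi_mul_one_plus_exp x). assert (Hp := phi_pos_lt_1 x).
  assert (0 < exp (- lam * x)) by apply exp_pos.
  nra.
Qed.

Lemma is_derive_phi x : is_derive phi x (lam * phi x * (1 - phi x)).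
Proof.
  unfold phi. assert (0 < exp (- lam * x)) by apply exp_pos.
  auto_derive; [lra|]. field. lra.
Qed.

Lemma ex_derive_phi x : ex_derive phi x.
Proof. eexists; apply is_derive_phi. Qed.

Lemma Derive_phi : Derive phi = fun x => lam * phi x * (1 - phi x).
Proof. apply functional_extensionality; intro x. apply is_derive_unique, is_derive_phi. Qed.

Lemma Derive_phi_pos x : 0 < Derive phi x.
Proof.
  rewrite Derive_phi. assert (Hp := phi_pos_lt_1 x). assert (Hs := sqrt2_pos).
  apply Rmult_lt_0_compat; [apply Rmult_lt_0_compat|]; lra.
Qed.

Lemma continuous_Derive_phi x : continuous (Derive phi) x.
Proof.
  rewrite Derive_phi. apply (ex_derive_continuous (V := R_NormedModule)).
  auto_derive. repeat split; apply ex_derive_phi.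
Qed.

Lemma weight_mul_phi_le_1 k x : 0 <= k <= 1/2 -> weight k x * phi x <= 1.
Proof.
  intros Hk. assert (Hs := sqrt2_pos). assert (Hp := phi_pos_lt_1 x).
  destruct (Rle_or_lt 0 x) as [Hx | Hx].
  - assert (0 <= sqrt 2 * k) by nra.
    assert (weight k x <= 1).
    { rewrite <- exp_0. apply exp_le_exp_of_le. nra. }
    assert (0 < weight k x) by apply exp_pos. nra.
  - assert (0 <= sqrt 2 * (1/2 - k)) by nra.
    assert (weight k x <= exp (- lam * x)) by (apply exp_le_exp_of_le; nra).
    assert (Hphi := phi_mul_one_plus_exp x). nra.
Qed.

Definition J_integrand (k : R) (m : nat) (x : R) : R := weight k x * Derive phi x * phi x ^ m.
Definition ibp_term (k : R) (j : nat) (x : R) : R := weight k x * phi x ^ j * (1 - phi x).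

Lemma J_integrand_pos k m x : 0 < J_integrand k m x.
Proof.
  unfold J_integrand. assert (Hp := phi_pos_lt_1 x).
  apply Rmult_lt_0_compat; [apply Rmult_lt_0_compat|].
  - apply exp_pos.
  - apply Derive_phi_pos.
  - apply pow_lt; lra.
Qed.

Lemma continuous_J_integrand k m x : continuous (J_integrand k m) x.
Proof.
  apply (ex_derive_continuous (V := R_NormedModule)).
  unfold J_integrand. rewrite Derive_phi. auto_derive. repeat split; apply ex_derive_phi.
Qed.

Lemma J_integrand_1_le_Derive_phi k x : 0 <= k <= 1/2 -> J_integrand k 1 x <= Derive phi x.
Proof.
  intros Hk. unfold J_integrand. rewrite pow_1.
  replace (weight k x * Derive phi x * phi x) with (weight k x * phi x * Derive phi x) by ring.
  rewrite <- (Rmult_1_l (Derive phi x)) at 2.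
  apply Rmult_le_compat_r; [apply Rlt_le, Derive_phi_pos|apply weight_mul_phi_le_1, Hk].
Qed.

Lemma RInt_J_integrand_1_le_1 k a b : 0 <= k <= 1/2 -> a <= b -> RInt (J_integrand k 1) a b <= 1.
Proof.
  intros Hk Hab.
  apply (Rle_trans _ (RInt (Derive phi) a b)).
  - apply RInt_le; trivial.
    + apply (ex_RInt_continuous (V := R_CompleteNormedModule)).
      intros; apply continuous_J_integrand.
    + apply (ex_RInt_continuous (V := R_CompleteNormedModule)).
      intros; apply continuous_Derive_phi.
    + intros x _. now apply J_integrand_1_le_Derive_phi.
  - rewrite RInt_Derive by auto using ex_derive_phi, continuous_Derive_phi.
    assert (Ha := phi_pos_lt_1 a). assert (Hb := phi_pos_lt_1 b). lra.
Qed.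

Lemma is_RInt_line_J_integrand_1 k : 0 <= k <= 1/2 ->
  exists l, is_RInt_line (J_integrand k 1) l /\ 0 < l.
Proof.
  intros Hk.
  destruct (is_RInt_line_nonneg_bounded (J_integrand k 1) (continuous_J_integrand k 1)
              (fun x => Rlt_le _ _ (J_integrand_pos k 1 x)) 1) as [l [Hl Hl01]].
  { intros a b. now apply RInt_J_integrand_1_le_1. }
  exists l. split; [exact Hl|].
  apply (Rlt_le_trans _ _ _ (RInt_gt_0 _ 0 1 Rlt_0_1 (fun x _ => J_integrand_pos k 1 x)
                               (fun x _ => continuous_J_integrand k 1 x)) Hl01).
Qed.

Lemma is_derive_ibp_term k j x :
  is_derive (ibp_term k (S j)) x
    ((INR j + 1 - 2 * k) * J_integrand k j x - (INR j + 2) * J_integrand k (S j) x).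
Proof.
  unfold ibp_term, J_integrand. auto_derive.
  - repeat split; apply ex_derive_phi.
  - change (fun x => phi x) with phi. rewrite Derive_phi.
    change (match j with 0%nat => 1 | S _ => INR j + 1 end) with (INR (S j)).
    rewrite S_INR. simpl pow. field.
Qed.

Lemma ibp_term_bounds k j x : 0 <= k <= 1/2 ->
  0 < ibp_term k (S (S j)) x <= Rmin (phi x) (1 - phi x).
Proof.
  intros Hk. unfold ibp_term.
  assert (Hp := phi_pos_lt_1 x).
  assert (Hw := weight_mul_phi_le_1 k x Hk). assert (0 < weight k x) by apply exp_pos.
  assert (0 < phi x ^ j <= 1).
  { split; [apply pow_lt; lra|]. rewrite <- (pow1 j). apply pow_incr. lra. }
  replace (weight k x * phi x ^ S (S j) * (1 - phi x))
    with ((weight k x * phi x) * phi x ^ j * (phi x * (1 - phi x))) by (simpl; ring).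
  assert (0 < weight k x * phi x) by (apply Rmult_lt_0_compat; lra).
  set (a := weight k x * phi x) in *. set (b := phi x ^ j) in *.
  assert (0 < a * b <= 1) by (split; nra).
  set (c := a * b) in *. set (p := phi x) in *.
  assert (0 < p * (1 - p)) by nra.
  split; [|apply Rmin_glb]; nra.
Qed.

Lemma is_RInt_line_ibp_derivative k j : 0 <= k <= 1/2 ->
  is_RInt_line (fun x => (INR (S j) + 1 - 2 * k) * J_integrand k (S j) x
                         - (INR (S j) + 2) * J_integrand k (S (S j)) x) 0.
Proof.
  intros Hk. assert (Hlam : 0 < lam) by (assert (Hs := sqrt2_pos); lra).
  apply (is_RInt_gen_ext (Derive (ibp_term k (S (S j))))).
  { apply filter_forall. intros ab x _. apply is_derive_unique, is_derive_ibp_term. }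
  replace 0 with (0 - 0) by ring.
  apply is_RInt_gen_Derive; try (apply filter_forall; intros ab x _).
  - eexists. apply is_derive_ibp_term.
  - apply (continuous_ext (fun x => (INR (S j) + 1 - 2 * k) * J_integrand k (S j) x
                                    - (INR (S j) + 2) * J_integrand k (S (S j)) x)).
    { intro y. symmetry. apply is_derive_unique, is_derive_ibp_term. }
    apply (continuous_minus (V := R_NormedModule));
      apply (continuous_scal_r (V := R_NormedModule)); apply continuous_J_integrand.
  - apply (filterlim_m_infty_0_of_le_exp _ lam Hlam). intro x.
    destruct (ibp_term_bounds k j x Hk) as [H0 H1].
    rewrite Rabs_pos_eq by lra.
    apply (Rle_trans _ _ _ H1), (Rle_trans _ _ _ (Rmin_l _ _)), phi_le_exp.
  - apply (filterlim_p_infty_0_of_le_exp _ lam Hlam). intro x.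
    destruct (ibp_term_bounds k j x Hk) as [H0 H1].
    rewrite Rabs_pos_eq by lra.
    apply (Rle_trans _ _ _ H1), (Rle_trans _ _ _ (Rmin_r _ _)), one_minus_phi_le_exp.
Qed.

Lemma is_RInt_line_J_integrand_succ k n l : 0 <= k <= 1/2 -> (1 <= n)%nat ->
  is_RInt_line (J_integrand k n) l ->
  is_RInt_line (J_integrand k (S n)) ((INR n + 1 - 2 * k) / (INR n + 2) * l).
Proof.
  intros Hk Hn Hl. destruct n as [|j]; [lia|].
  assert (0 < INR (S j) + 2) by (assert (H := pos_INR (S j)); lra).
  replace ((INR (S j) + 1 - 2 * k) / (INR (S j) + 2) * l)
    with ((INR (S j) + 1 - 2 * k) / (INR (S j) + 2) * l + (- 1 / (INR (S j) + 2)) * 0)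
    by ring.
  apply (is_RInt_line_lin_comb _ _ _ _ _ _ _ Hl (is_RInt_line_ibp_derivative k j Hk)).
  intro x. field. lra.
Qed.

Lemma Jint_unique k n l : is_RInt_line (J_integrand k n) l -> Jint k n = l.
Proof. apply (is_RInt_gen_unique (J_integrand k n)). Qed.

Lemma Jint_correct k n : 0 <= k <= 1/2 -> (1 <= n)%nat ->
  is_RInt_line (J_integrand k n) (Jint k n).
Proof.
  intros Hk Hn. induction n as [|n IH]; [lia|].
  destruct (Nat.eq_dec n 0) as [-> | Hn0].
  - destruct (is_RInt_line_J_integrand_1 k Hk) as [l [Hl _]].
    now rewrite (Jint_unique _ _ _ Hl).
  - assert (Hsucc := is_RInt_line_J_integrand_succ k n _ Hk ltac:(lia) (IH ltac:(lia))).
    now rewrite (Jint_unique _ _ _ Hsucc).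
Qed.

Lemma Jint_1_pos k : 0 <= k <= 1/2 -> 0 < Jint k 1.
Proof.
  intros Hk. destruct (is_RInt_line_J_integrand_1 k Hk) as [l [Hl Hpos]].
  now rewrite (Jint_unique _ _ _ Hl).
Qed.

Lemma Jint_succ k n : 0 <= k <= 1/2 -> (1 <= n)%nat ->
  Jint k (S n) = (INR n + 1 - 2 * k) / (INR n + 2) * Jint k n.
Proof.
  intros Hk Hn. apply Jint_unique.
  exact (is_RInt_line_J_integrand_succ k n _ Hk Hn (Jint_correct k n Hk Hn)).
Qed.

Lemma Iint_eq k : 0 <= k <= 1/2 -> Iint k = lam * (Jint k 1 - Jint k 2).
Proof.
  intros Hk. apply is_RInt_gen_unique.
  replace (lam * (Jint k 1 - Jint k 2)) with (lam * Jint k 1 + - lam * Jint k 2) by ring.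
  apply (is_RInt_line_lin_comb _ _ _ _ _ _ _ (Jint_correct k 1 Hk ltac:(lia))
           (Jint_correct k 2 Hk ltac:(lia))).
  intro x. unfold J_integrand. rewrite Derive_phi. ring.
Qed.

Lemma kappa_range s : 1/3 <= s <= 1 -> 0 <= 1/2 - (1 - s) / (1 + s) <= 1/2.
Proof.
  intros Hs. replace (1/2 - (1 - s) / (1 + s)) with ((3 * s - 1) / (2 * (1 + s))) by (field; lra).
  split; [apply Rdiv_le_0_compat|apply Rmult_le_reg_r with (2 * (1 + s))]; try lra.
  field_simplify; lra.
Qed.

Lemma Jint_kappa s : 1/3 <= s <= 1 ->
  let k := 1/2 - (1 - s) / (1 + s) in
  Iint k = 4 * s / (3 * sqrt 2 * (1 + s)) * Jint k 1 /\
  Jint k 2 = (3 - s) / (3 * (1 + s)) * Jint k 1 /\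
  Jint k 3 = (3 - s) / (3 * (1 + s) ^ 2) * Jint k 1.
Proof.
  intros Hs k. assert (Hk : 0 <= k <= 1/2) by now apply kappa_range.
  rewrite Iint_eq, (Jint_succ k 2), (Jint_succ k 1) by (assumption || lia).
  rewrite lam_eq_inv_sqrt2. assert (Hs2 := sqrt2_pos).
  set (J := Jint k 1). unfold k. simpl INR. repeat split; field; lra.
Qed.

Definition sf (r : R) : R := sqrt (r / (r + 1/10)).
Definition sb (r : R) : R := sqrt ((r + ub r - 2) / (r + 1/10)).

Definition front_ratio (r u x y : R) : R :=
  (6 * x ^ 2 - x - 3 + 3 * (1/10) / (r + 1/10))
  * ((r + 1/10) * (3 * x + 3 * y - 2) / (4 * x * (2 - u))).
Definition back_ratio (r u x y : R) : R :=
  (3 + y - 6 * y ^ 2 + 3 * (u - 21/10) / (r + 1/10))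
  * ((2 - u) / (2 * y * (3 * x + 3 * y - 2))).

Lemma M_f_div_Mhat_f r : 0 < r -> 1/3 < sf r <= 1 -> 1/3 < sb r -> ub r < 2 ->
  M_f r / Mhat_f r = - front_ratio r (ub r) (sf r) (sb r).
Proof.
  intros Hr Hx Hy Hu.
  destruct (Jint_kappa (sf r) ltac:(lra)) as [HI [HJ2 HJ3]].
  assert (HJ := Jint_1_pos (kappa_f r) (kappa_range (sf r) ltac:(lra))).
  unfold M_f, Mhat_f, mu0, D0, Sr, front_ratio.
  change (kappa_f r) with (1/2 - (1 - sf r) / (1 + sf r)) in *.
  change (qfp r) with (1 + sf r). change (qfm r) with (1 - sf r).
  change (qbp r) with (1 + sb r). change (qbm r) with (1 - sb r).
  rewrite HI, HJ2, HJ3.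
  set (J := Jint _ 1) in *.
  assert (Hs2 := sqrt2_pos).
  field. repeat split; intro Hc; nra.
Qed.

Lemma M_b_div_Mhat_b r : 0 < r -> 1/3 < sf r -> 1/3 < sb r <= 1 -> ub r < 2 ->
  M_b r / Mhat_b r = back_ratio r (ub r) (sf r) (sb r).
Proof.
  intros Hr Hx Hy Hu.
  destruct (Jint_kappa (sb r) ltac:(lra)) as [HI [HJ2 HJ3]].
  assert (HJ := Jint_1_pos (kappa_b r) (kappa_range (sb r) ltac:(lra))).
  unfold M_b, Mhat_b, mu0, Sr, back_ratio.
  change (kappa_b r) with (1/2 - (1 - sb r) / (1 + sb r)) in *.
  change (qfp r) with (1 + sf r). change (qfm r) with (1 - sf r).
  change (qbp r) with (1 + sb r). change (qbm r) with (1 - sb r).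
  rewrite HI, HJ2, HJ3.
  set (J := Jint _ 1) in *.
  assert (Hs2 := sqrt2_pos).
  field. repeat split; intro Hc; nra.
Qed.

Lemma back_ratio_gt r u x y : 10 <= r -> 6/5 < u < 4/3 -> 9/10 <= x < 1 -> 9/10 <= y < 1 ->
  -1/2 < back_ratio r u x y.
Proof.
  intros Hr Hu Hx Hy. unfold back_ratio.
  assert (Hd : 6 <= 2 * y * (3 * x + 3 * y - 2)) by nra.
  assert (Hq : -3/10 <= 3 * (u - 21/10) / (r + 1/10) < 0).
  { split; [apply (Rmult_le_reg_r (r + 1/10))|apply (Rmult_lt_reg_r (r + 1/10))];
      try lra; field_simplify; lra. }
  assert (Hc : 0 < (2 - u) / (2 * y * (3 * x + 3 * y - 2)) < 1/5).
  { split; [apply Rdiv_lt_0_compat; lra|apply (Rmult_lt_reg_r (2 * y * (3 * x + 3 * y - 2)))];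
      try lra; field_simplify; lra. }
  assert (Hn : -23/10 < 3 + y - 6 * y ^ 2 + 3 * (u - 21/10) / (r + 1/10) < 0) by (split; nra).
  nra.
Qed.

Lemma front_ratio_ge r u x y : 10 <= r -> 6/5 < u < 4/3 -> 9/10 <= x < 1 -> 9/10 <= y < 1 ->
  9/10 <= front_ratio r u x y.
Proof.
  intros Hr Hu Hx Hy. unfold front_ratio.
  assert (Hq : 0 <= 3 * (1/10) / (r + 1/10)) by (apply Rdiv_le_0_compat; lra).
  assert (Hn : 9/10 <= 6 * x ^ 2 - x - 3 + 3 * (1/10) / (r + 1/10)) by nra.
  assert (Hc : 1 <= (r + 1/10) * (3 * x + 3 * y - 2) / (4 * x * (2 - u))).
  { assert (0 < 4 * x * (2 - u) <= 4) by (split; nra).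
    apply (Rmult_le_reg_r (4 * x * (2 - u))); [lra|]. field_simplify; nra. }
  nra.
Qed.

Lemma ub_spec r : 4/5 < r -> ub_prop r (ub r).
Proof.
  intro Hr. unfold ub. apply epsilon_spec.
  set (q := fun u => 1 + sqrt ((r + u - 2) / (r + 1/10))).
  assert (Hq : forall u, 6/5 <= u <= 4/3 -> 1 < q u < 2).
  { intros u Hu. unfold q.
    assert (Harg : 0 < (r + u - 2) / (r + 1/10) < 1).
    { split; [apply Rdiv_lt_0_compat; lra|].
      apply (Rmult_lt_reg_r (r + 1/10)); [lra|]. field_simplify; lra. }
    assert (Hs := sqrt_lt_R0 _ (proj1 Harg)).
    assert (Hss := sqrt_sqrt _ (Rlt_le _ _ (proj1 Harg))).
    nra. }
  set (g := fun u => - (2 - u + 2 * q u * (1 - u))).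
  destruct (Ranalysis5.IVT_interv g (6/5) (4/3)) as [u [Hu Hroot]].
  - intros u Hu. apply continuity_pt_filterlim, (ex_derive_continuous (V := R_NormedModule) g).
    unfold g, q. auto_derive. apply Rdiv_lt_0_compat; lra.
  - lra.
  - assert (H := Hq (6/5) ltac:(lra)). unfold g. nra.
  - assert (H := Hq (4/3) ltac:(lra)). unfold g. nra.
  - exists u. assert (H := Hq u Hu). split; [|unfold g, q in Hroot; lra].
    split; apply Rnot_le_lt; intro Hend.
    + assert (u = 6/5) by lra. subst u. unfold g in Hroot. nra.
    + assert (u = 4/3) by lra. subst u. unfold g in Hroot. nra.
Qed.

Lemma sqrt_ratio_bounds a b : 0 < b -> 81/100 * b <= a < b -> 9/10 <= sqrt (a / b) < 1.
Proof.
  intros Hb Hab.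
  assert (Hq : 81/100 <= a / b < 1).
  { split; [apply (Rmult_le_reg_r b)|apply (Rmult_lt_reg_r b)]; try lra; field_simplify; lra. }
  assert (Hs := sqrt_pos (a / b)). assert (Hss := sqrt_sqrt (a / b) ltac:(lra)).
  split; nra.
Qed.

Lemma sf_bounds r : 10 <= r -> 9/10 <= sf r < 1.
Proof. intros Hr. apply sqrt_ratio_bounds; lra. Qed.

Lemma sb_bounds r : 10 <= r -> 6/5 < ub r < 4/3 -> 9/10 <= sb r < 1.
Proof. intros Hr Hu. apply sqrt_ratio_bounds; lra. Qed.

Theorem theorem2 : exists r0 : R, 0 < r0 /\ forall r : R, r0 < r -> Mhat r <> 0.
Proof.
  exists 10. split; [lra|]. intros r Hr.
  destruct (ub_spec r ltac:(lra)) as [Hu _].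
  assert (Hx := sf_bounds r ltac:(lra)). assert (Hy := sb_bounds r ltac:(lra) Hu).
  unfold Mhat. rewrite M_b_div_Mhat_b, M_f_div_Mhat_f by lra.
  assert (Hb := back_ratio_gt r (ub r) (sf r) (sb r) ltac:(lra) Hu Hx Hy).
  assert (Hf := front_ratio_ge r (ub r) (sf r) (sb r) ltac:(lra) Hu Hx Hy).
  lra.
Qed.
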